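(* Run UBEV-S (described in the context) on a finite-horizon episodic stationary MDP. Outside of the failure event, for all episodes $k$, timesteps $t\in[H]$ and states $s$, $\tilde V^{\pi_k}_t(s)\ge V^*_t(s)$.
   Context: Setting: a finite-horizon episodic MDP with finite state set $\mathcal S$ ($|\mathcal S|=S$), finite action set $\mathcal A$ ($|\mathcal A|=A$), horizon $H$, stationary transitions $p(s'\mid s,a)$ and mean rewards $r(s,a)\in[0,1]$ (observed rewards in $[0,1]$). $V^*_t$ is the optimal value function at timestep $t$ ($V^*_{H+1}\equiv0$). For a vector $V$, $\mathrm{rng}\,V=\max_sV(s)-\min_sV(s)$. Algorithm UBEV-S (input $\delta\in(0,1]$): maintain, aggregated over all timesteps of all past episodes, counts $n(s,a)$, reward sums $l(s,a)$, transition counts $m(s',s,a)$ (initially $0$), and a scalar $\phi^+$ initialized to $0$ once. At the start of each episode, set $\tilde V_{H+1}\equiv0$ and for $t=H,\dots,1$ and each $s$: for each $a$, $\phi(s,a)=\sqrt{(2\ln\ln(\max\{e,n(s,a)\})+\ln(27HSA/\delta))/n(s,a)}$, $\hat r(s,a)=l(s,a)/n(s,a)$, $\hat p(s,a)=m(\cdot,s,a)/n(s,a)$, $Q(a)=\min\{1,\hat r+\phi\}+\min\{\max_{s'}\tilde V_{t+1}(s'),\hat p(s,a)^\top\tilde V_{t+1}+\min\{H-t,\mathrm{rng}\,\tilde V_{t+1}+\phi^+\}\phi(s,a)\}$; set $\pi_k(s,t)=\arg\max_aQ(a)$, $\tilde V_t(s)=Q(\pi_k(s,t))$, $\phi^+\leftarrow\max\{4\sqrt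 SH^2\phi(s,\pi_k(s,t)),\phi^+\}$. Then execute $\pi_k$ for $H$ steps and update the counts. In episode $k$: $n_k,\hat r_k,\hat p_k,\phi_k$ denote the quantities at the start of the episode, and $\tilde V^{\pi_k}_t$ is the vector $\tilde V_t$ computed in episode $k$. Failure event: let $w_{tk}(s,a)$ be the probability, in episode $k$ under $\pi_k$, of being in $s$ at step $t$ and taking $a$. ''Outside of the failure event'' means that for all episodes $k$, timesteps $t$ and pairs $(s,a)$: $n_k(s,a)\ge\frac12\sum_{i<k}\sum_{t\in[H]}w_{ti}(s,a)-H\ln\frac{9SA}{\delta}$; $|\hat r_k(s,a)-r(s,a)|\le\phi_k(s,a)$; $|(\hat p_k(s,a)-p(\cdot\mid s,a))^\top V^*_{t+1}|\le(\mathrm{rng}\,V^*_{t+1})\phi_k(s,a)$; and $\|\hat p_k(s,a)-p(\cdot\mid s,a)\|_1\le4\sqrt S\,\phi_k(s,a)$. *)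

From HB Require Import structures.
From mathcomp Require Import all_boot all_order all_algebra.
From mathcomp Require Import all_classical all_reals all_analysis.
Set Implicit Arguments.
Unset Strict Implicit.
Unset Printing Implicit Defensive.
Import Order.TTheory GRing.Theory Num.Theory.
Local Open Scope ring_scope.

(* (correct whenever T is nonempty; 0 on an empty type)                *)
Definition fmax {R : realType} {T : finType} (f : T -> R) : R :=
  match enum T with
  | [::] => 0
  | x :: _ => \big[Num.max/f x]_(y : T) f y
  end.

Definition fmin {R : realType} {T : finType} (f : T -> R) : R :=
  - fmax (fun y => - f y).

Definition rng {R : realType} {T : finType} (f : T -> R) : R := fmax f - fmin f.

(* Optimal value function.  Vstar h s = optimal value with h steps to go; *)
(* p s a s' = p(s' | s, a).                                            *)
Fixpoint Vstar {R : realType} {S A : finType} (p : S -> A -> S -> R)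
    (r : S -> A -> R) (h : nat) (s : S) : R :=
  match h with
  | 0 => 0
  | h'.+1 => fmax (fun a : A => r s a + \sum_(s' : S) p s a s' * Vstar p r h' s')
  end.

Definition Vopt {R : realType} {S A : finType} (p : S -> A -> S -> R)
    (r : S -> A -> R) (H t : nat) : S -> R :=
  Vstar p r (H.+1 - t).

Definition confw {R : realType} (S A : finType) (H : nat) (delta : R) (n : nat) : R :=
  Num.sqrt ((2 * ln (ln (Num.max (expR 1) n%:R))
             + ln (27 * H%:R * #|S|%:R * #|A|%:R / delta)) / n%:R).

(* The scalar phi^+ is an extended nonnegative real: None encodes +oo,
   which is what phi(s,a) is when n(s,a) = 0. *)

(* Q(a) at timestep t, state s, given counts n, reward sums l,
   transition counts m (m s a s' = m(s',s,a)), the vector V~_{t+1} = Vn,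
   and the current phi^+ = php.  When n(s,a) = 0, phi(s,a) = +oo and
   Q(a) = min{1,oo} + min{max V~_{t+1}, oo} = 1 + max V~_{t+1}. *)
Definition Qval {R : realType} {S A : finType} (H : nat) (delta : R)
    (n : S -> A -> nat) (l : S -> A -> R) (m : S -> A -> S -> nat)
    (Vn : S -> R) (php : option R) (t : nat) (s : S) (a : A) : R :=
  if n s a == 0%N then 1 + fmax Vn
  else
    let ph := confw S A H delta (n s a) in
    let rhat := l s a / (n s a)%:R in
    let pV := \sum_(s' : S) ((m s a s')%:R / (n s a)%:R) * Vn s' in
    let c := match php with
             | None => (H - t)%:R
             | Some x => Num.min (H - t)%:R (rng Vn + x)
             end in
    Num.min 1 (rhat + ph) + Num.min (fmax Vn) (pV + c * ph).

Definition phiupd {R : realType} {S A : finType} (H : nat) (delta : R)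
    (n : S -> A -> nat) (php : option R) (s : S) (a : A) : option R :=
  match php with
  | None => None
  | Some x =>
      if n s a == 0%N then None
      else Some (Num.max (4 * Num.sqrt #|S|%:R * (H%:R) ^+ 2
                            * confw S A H delta (n s a)) x)
  end.

(* One timestep t of the planning loop: states processed in the order
   sord; amax t s is the (arbitrary) argmax rule. Returns
   (V~_t, pi_k(.,t), phi^+). *)
Definition plan_step {R : realType} {S A : finType} (H : nat) (delta : R)
    (amax : nat -> S -> (A -> R) -> A) (sord : seq S)
    (n : S -> A -> nat) (l : S -> A -> R) (m : S -> A -> S -> nat)
    (t : nat) (Vn : S -> R) (php0 : option R) :
    (S -> R) * (S -> A) * option R :=
  foldl (fun acc s =>
           let: (V, P, php) := acc in
           let Q := Qval H delta n l m Vn php t s in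
           let a := amax t s Q in
           ((fun s' => if s' == s then Q a else V s'),
            (fun s' => if s' == s then a else P s'),
            phiupd H delta n php s a))
        ((fun _ => 0), (fun s => amax t s (fun _ => 0)), php0) sord.

(* Backward induction over t = H, H-1, ..., H-j+1.
   Returns (t |-> V~_t, (s,t) |-> pi_k(s,t), phi^+). V~_{H+1} = 0. *)
Fixpoint plan_aux {R : realType} {S A : finType} (H : nat) (delta : R)
    (amax : nat -> S -> (A -> R) -> A) (sord : seq S)
    (n : S -> A -> nat) (l : S -> A -> R) (m : S -> A -> S -> nat)
    (php0 : option R) (j : nat) :
    (nat -> S -> R) * (S -> nat -> A) * option R :=
  match j with
  | 0 => ((fun _ _ => 0), (fun s _ => amax 0%N s (fun _ => 0)), php0)
  | j'.+1 =>
      let: (V, P, php) := plan_aux H delta amax sord n l m php0 j' in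
      let t := (H - j')%N in
      let: (Vt, Pt, php') := plan_step H delta amax sord n l m t (V t.+1) php in
      ((fun t' => if t' == t then Vt else V t'),
       (fun s t' => if t' == t then Pt s else P s t'),
       php')
  end.

Definition plan {R : realType} {S A : finType} (H : nat) (delta : R)
    (amax : nat -> S -> (A -> R) -> A) (sord : seq S)
    (n : S -> A -> nat) (l : S -> A -> R) (m : S -> A -> S -> nat)
    (php0 : option R) :=
  plan_aux H delta amax sord n l m php0 H.

(* Sample path: x i t = state of episode i at step t (t = 1..H+1),     *)
(* rw i t = observed reward at step t of episode i, and the action     *)
(* taken is pol i (x i t) t.  Counts at the start of episode k.        *)
Definition n_of {S A : finType} (H : nat) (x : nat -> nat -> S)
    (pol : nat -> S -> nat -> A) (k : nat) (s : S) (a : A) : nat :=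
  \sum_(i < k) \sum_(1 <= t < H.+1) ((x i t == s) && (pol i (x i t) t == a)).

Definition l_of {R : realType} {S A : finType} (H : nat) (x : nat -> nat -> S)
    (rw : nat -> nat -> R) (pol : nat -> S -> nat -> A) (k : nat) (s : S) (a : A) : R :=
  \sum_(i < k) \sum_(1 <= t < H.+1)
     (if (x i t == s) && (pol i (x i t) t == a) then rw i t else 0).

Definition m_of {S A : finType} (H : nat) (x : nat -> nat -> S)
    (pol : nat -> S -> nat -> A) (k : nat) (s : S) (a : A) (s' : S) : nat :=
  \sum_(i < k) \sum_(1 <= t < H.+1)
     [&& x i t == s, pol i (x i t) t == a & x i t.+1 == s'].

Definition plan_k {R : realType} {S A : finType} (H : nat) (delta : R)
    (amax : nat -> nat -> S -> (A -> R) -> A) (sord : seq S)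
    (x : nat -> nat -> S) (rw : nat -> nat -> R)
    (pol : nat -> S -> nat -> A) (php : nat -> option R) (k : nat) :=
  plan H delta (amax k) sord (n_of H x pol k) (l_of H x rw pol k)
       (m_of H x pol k) (php k).

(* pol, php form the run of UBEV-S along the sample path (x, rw):
   php k = phi^+ at the start of episode k, initialised to 0 once. *)
Definition ubevs_run {R : realType} {S A : finType} (H : nat) (delta : R)
    (amax : nat -> nat -> S -> (A -> R) -> A) (sord : seq S)
    (x : nat -> nat -> S) (rw : nat -> nat -> R)
    (pol : nat -> S -> nat -> A) (php : nat -> option R) : Prop :=
  php 0%N = Some 0 /\
  forall k, pol k = (plan_k H delta amax sord x rw pol php k).1.2 /\
            php k.+1 = (plan_k H delta amax sord x rw pol php k).2.

Definition Vtil {R : realType} {S A : finType} (H : nat) (delta : R)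
    (amax : nat -> nat -> S -> (A -> R) -> A) (sord : seq S)
    (x : nat -> nat -> S) (rw : nat -> nat -> R)
    (pol : nat -> S -> nat -> A) (php : nat -> option R) (k t : nat) : S -> R :=
  (plan_k H delta amax sord x rw pol php k).1.1 t.

(* Occupancy: sdist p0 p pi t = distribution of the state at step t+1  *)
(* under policy pi started from initial distribution p0;               *)
(* w pi t (s,a) = P(s_t = s, a_t = a).                                 *)
Fixpoint sdist {R : realType} {S A : finType} (p0 : S -> R)
    (p : S -> A -> S -> R) (pi : S -> nat -> A) (t : nat) : S -> R :=
  match t with
  | 0 => p0
  | t'.+1 => fun s' => \sum_(s : S) sdist p0 p pi t' s * p s (pi s t'.+1) s'
  end.

Definition wocc {R : realType} {S A : finType} (p0 : S -> R)
    (p : S -> A -> S -> R) (pi : S -> nat -> A) (t : nat) (s : S) (a : A) : R :=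
  sdist p0 p pi t.-1 s * (pi s t == a)%:R.

(* "Outside of the failure event".  When n_k(s,a) = 0, phi_k(s,a) = +oo *)
(* and the three concentration conditions hold trivially.              *)
Definition no_failure {R : realType} {S A : finType} (H : nat) (delta : R)
    (p0 : S -> R) (p : S -> A -> S -> R) (r : S -> A -> R)
    (x : nat -> nat -> S) (rw : nat -> nat -> R)
    (pol : nat -> S -> nat -> A) : Prop :=
  forall (k : nat) (s : S) (a : A),
    let n := n_of H x pol k s a in
    let ph := confw S A H delta n in
    let rhat := l_of H x rw pol k s a / n%:R in
    let phat := fun s' => (m_of H x pol k s a s')%:R / n%:R in
    [/\ n%:R >= 2^-1 * (\sum_(i < k) \sum_(1 <= t < H.+1) wocc p0 p (pol i) t s a)
                - H%:R * ln (9 * #|S|%:R * #|A|%:R / delta),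
        (0 < n)%N -> `|rhat - r s a| <= ph,
        (0 < n)%N -> forall t, (1 <= t <= H)%N ->
           `|\sum_(s' : S) (phat s' - p s a s') * Vopt p r H t.+1 s'|
             <= rng (Vopt p r H t.+1) * ph
      & (0 < n)%N -> \sum_(s' : S) `|phat s' - p s a s'| <= 4 * Num.sqrt #|S|%:R * ph].

From HB Require Import structures.
From mathcomp Require Import all_boot all_order all_algebra.
From mathcomp Require Import all_classical all_reals all_analysis.
From mathcomp Require Import ring lra zify.
Import Order.TTheory GRing.Theory Num.Theory.
Local Open Scope ring_scope.

(* Within an episode, optimism is proved by backward induction over t, jointly
   with a bound on how optimistic the planner is: whenever phi^+ is finite,
   V~_t - V*_t <= phi^+ ((H + 1 - t) / H)^2.  Since that factor is at most 1,
   this bound gives rng V*_{t+1} <= rng V~_{t+1} + phi^+, so on the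
   failure-free event the bonus of Q(a) dominates (p^ - p)^T V*_{t+1} and
   Q(a) >= r(s,a) + p(s,a)^T V*_{t+1} for every a.  Conversely, one Bellman
   step adds at most (2 + (H - t) + 4 sqrt S (H - t)) phi to the gap, and the
   update phi^+ <- max(4 sqrt S H^2 phi, phi^+) makes this fit into the growth
   of ((H + 1 - t) / H)^2. *)

Lemma foldl_ind (T X : Type) (f : X -> T -> X) (P : seq T -> X -> Prop) (x0 : X) :
  P [::] x0 -> (forall D x y, P D x -> P (rcons D y) (f x y)) ->
  forall L, P L (foldl f x0 L).
Proof. by move=> P0 Pstep; elim/last_ind => [|L y IH] //; rewrite foldl_rcons; apply: Pstep. Qed.

Lemma gap_growth {R : realFieldType} {phi q j x0 x w : R} :
  0 <= phi -> 4 <= q -> 0 <= j -> 0 <= w -> x0 <= x -> q * phi <= x * w ->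
  phi * (2 + j + q * j) + x0 * (j ^+ 2 * w) <= x * ((j + 1) ^+ 2 * w).
Proof.
move=> phi0 q4 j0 w0 x0x qphi.
have : 0 <= (x - x0) * (j ^+ 2 * w) by rewrite mulr_ge0 ?subr_ge0 ?mulr_ge0 ?exprn_ge0.
have : 0 <= (x * w - q * phi) * (2 * j + 1) by rewrite mulr_ge0 ?subr_ge0 //; lra.
have : 0 <= phi * ((q - 1) * j + (q - 2)) by rewrite mulr_ge0 // addr_ge0 ?mulr_ge0 //; lra.
have -> : x * ((j + 1) ^+ 2 * w) = x * (j ^+ 2 * w) + x * w * (2 * j + 1) by ring.
nra.
Qed.

Section FiniteMax.
Context {R : realType} {T : finType}.
Implicit Types (f g q : T -> R) (c d : R).

Lemma le_fmax f y : f y <= fmax f.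
Proof.
rewrite /fmax; case E: (enum T) => [|x0 rest]; last exact: le_bigmax.
by have := mem_enum T y; rewrite E in_nil inE.
Qed.

Lemma fmax_le {f c} (y0 : T) : (forall y, f y <= c) -> fmax f <= c.
Proof.
move=> fc; rewrite /fmax; case E: (enum T) => [|x0 rest].
  by have := mem_enum T y0; rewrite E in_nil inE.
by apply: bigmax_le => // y _.
Qed.

Lemma fmin_le f y : fmin f <= f y.
Proof. by rewrite /fmin lerNl le_fmax. Qed.

Lemma le_fmin {f c} (y0 : T) : (forall y, c <= f y) -> c <= fmin f.
Proof. by move=> cf; rewrite /fmin lerNr; apply: (fmax_le y0) => y; rewrite lerN2. Qed.

Lemma rng_le {f c} (y0 : T) : (forall y, 0 <= f y <= c) -> rng f <= c.
Proof.
move=> f0c; have := fmax_le y0 (fun y => proj2 (andP (f0c y))).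
have := le_fmin y0 (fun y => proj1 (andP (f0c y))).
rewrite /rng; lra.
Qed.

Lemma rng_le_shift {f g d} (y0 : T) :
  (forall y, g y <= f y <= g y + d) -> rng g <= rng f + d.
Proof.
move=> gfd; have gf y := proj1 (andP (gfd y)); have fgd y := proj2 (andP (gfd y)).
have maxg : fmax g <= fmax f.
  by apply: (fmax_le y0) => y; exact: le_trans (gf y) (le_fmax f y).
have minf : fmin f - d <= fmin g.
  by apply: (le_fmin y0) => y; rewrite lerBlDr; exact: le_trans (fmin_le f y) (fgd y).
rewrite /rng; lra.
Qed.

Lemma expectation_le q g c :
  (forall y, 0 <= q y) -> \sum_y q y = 1 -> (forall y, g y <= c) -> \sum_y q y * g y <= c.
Proof.
move=> q0 q1 gc; apply: le_trans (_ : \sum_y q y * c <= _).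
  by apply: ler_sum => y _; apply: ler_wpM2l.
by rewrite -big_distrl /= q1 mul1r.
Qed.

Lemma sum_mul_le_l1 (e v : T -> R) c :
  (forall y, 0 <= v y <= c) -> \sum_y e y * v y <= (\sum_y `|e y|) * c.
Proof.
move=> v0c; rewrite big_distrl /=; apply: ler_sum => y _.
have /andP[v0 vc] := v0c y.
apply: le_trans (ler_norm _) _; rewrite normrM (ger0_norm v0).
by apply: ler_wpM2l.
Qed.

End FiniteMax.

Section OptimalValue.
Context {R : realType} {S A : finType} {p : S -> A -> S -> R} {r : S -> A -> R}.
Hypothesis hp : forall s a s', 0 <= p s a s'.
Hypothesis hp1 : forall s a, \sum_s' p s a s' = 1.
Hypothesis hr : forall s a, 0 <= r s a <= 1.

Lemma Vstar_bounds (a0 : A) h s : 0 <= Vstar p r h s <= h%:R.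
Proof.
elim: h s => [|h IH] s /=; first by rewrite lexx.
have V0h s' := IH s'.
have /andP[r0 r1] := hr s a0; apply/andP; split.
  apply: le_trans (le_fmax _ a0); apply: addr_ge0 => //.
  by apply: sumr_ge0 => s' _; exact: mulr_ge0 (hp _ _ _) (proj1 (andP (V0h s'))).
apply: (fmax_le a0) => a; rewrite -natr1 [_ + 1]addrC; apply: lerD.
  by have /andP[] := hr s a.
by apply: expectation_le => // s'; exact: proj2 (andP (V0h s')).
Qed.

Lemma Vopt_bounds (a0 : A) H t s : 0 <= Vopt p r H t s <= (H.+1 - t)%:R.
Proof. exact: Vstar_bounds. Qed.

Lemma Vopt_bellman H t s : (t <= H)%N ->
  Vopt p r H t s = fmax (fun a => r s a + \sum_s' p s a s' * Vopt p r H t.+1 s').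
Proof. by move=> tH; rewrite /Vopt subSS subSn. Qed.

End OptimalValue.

Definition ext_le {d : Order.disp_t} {T : porderType d} (o1 o2 : option T) : Prop :=
  match o1, o2 with
  | _, None => True
  | Some x1, Some x2 => (x1 <= x2)%O
  | None, Some _ => False
  end.

Lemma ext_le_refl {d : Order.disp_t} {T : porderType d} (o : option T) : ext_le o o.
Proof. by case: o => /=. Qed.

Lemma ext_le_trans {d : Order.disp_t} {T : porderType d} {o1 o2 o3 : option T} :
  ext_le o1 o2 -> ext_le o2 o3 -> ext_le o1 o3.
Proof. by case: o3 => [x3|]; case: o2 => [x2|]; case: o1 => [x1|] //=; apply: le_trans. Qed.

Lemma ext_le_phiupd {R : realType} {S A : finType} {H} {delta : R} {n ph s a} :
  ext_le ph (@phiupd R S A H delta n ph s a).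
Proof. by case: ph => [x|] //=; case: eqP => //= _; rewrite le_max lexx orbT. Qed.

Definition gap_scale {R : numFieldType} (H t : nat) : R := (H.+1 - t)%:R ^+ 2 / H%:R ^+ 2.

Lemma gap_scale_ge0 {R : numFieldType} H t : 0 <= gap_scale H t :> R.
Proof. by rewrite /gap_scale divr_ge0 ?exprn_ge0. Qed.

Lemma gap_scale_le1 {R : numFieldType} H t : (0 < t)%N -> gap_scale H t <= 1 :> R.
Proof.
move=> t0; rewrite /gap_scale; case: (posnP H) => [->|H0].
  by rewrite expr0n /= invr0 mulr0.
rewrite ler_pdivrMr ?exprn_gt0 ?ltr0n // mul1r ler_sqr ?nnegrE ?ler0n // ler_nat; lia.
Qed.

Section Planning.
Variables (R : realType) (S A : finType) (H : nat) (delta : R).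
Variables (p : S -> A -> S -> R) (r : S -> A -> R).
Hypothesis hp : forall s a s', 0 <= p s a s'.
Hypothesis hp1 : forall s a, \sum_s' p s a s' = 1.
Hypothesis hr : forall s a, 0 <= r s a <= 1.
Variables (n : S -> A -> nat) (l : S -> A -> R) (m : S -> A -> S -> nat).

Local Notation V t := (Vopt p r H t).
Local Notation phi k := (confw S A H delta k).
Local Notation phat s a s' := ((m s a s')%:R / (n s a)%:R).

Hypothesis reward_conc : forall s a, (0 < n s a)%N ->
  `|l s a / (n s a)%:R - r s a| <= phi (n s a).
Hypothesis value_conc : forall s a, (0 < n s a)%N -> forall t, (1 <= t <= H)%N ->
  `|\sum_s' (phat s a s' - p s a s') * V t.+1 s'| <= rng (V t.+1) * phi (n s a).
Hypothesis l1_conc : forall s a, (0 < n s a)%N ->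
  \sum_s' `|phat s a s' - p s a s'| <= 4 * Num.sqrt #|S|%:R * phi (n s a).

Lemma confw_ge0 k : 0 <= phi k.
Proof. exact: sqrtr_ge0. Qed.

Definition optimistic_at t (Vt : S -> R) (ph : option R) s : Prop :=
  V t s <= Vt s <= (H.+1 - t)%:R /\
  forall x, ph = Some x -> Vt s - V t s <= x * gap_scale H t.

Definition optimistic t (Vt : S -> R) (ph : option R) : Prop :=
  forall s, optimistic_at t Vt ph s.

Lemma optimistic_at_mono t Vt ph ph' s :
  ext_le ph ph' -> optimistic_at t Vt ph s -> optimistic_at t Vt ph' s.
Proof.
move=> le_ph [bnd gap]; split => // x' e'; move: le_ph; rewrite e'.
case: ph gap => [x|] //= gap xx'; apply: le_trans (gap x erefl) _.
by rewrite ler_wpM2r ?gap_scale_ge0.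
Qed.

Definition bonus_coef t (Vn : S -> R) (ph : option R) : R :=
  if ph is Some x then Num.min (H - t)%:R (rng Vn + x) else (H - t)%:R.

Lemma Qval_unvisited Vn ph t s a :
  n s a = 0%N -> Qval H delta n l m Vn ph t s a = 1 + fmax Vn.
Proof. by move=> n0; rewrite /Qval n0. Qed.

Lemma Qval_visited Vn ph t s a : (0 < n s a)%N ->
  Qval H delta n l m Vn ph t s a =
  Num.min 1 (l s a / (n s a)%:R + phi (n s a)) +
  Num.min (fmax Vn) (\sum_s' phat s a s' * Vn s' + bonus_coef t Vn ph * phi (n s a)).
Proof. by rewrite /Qval lt0n => /negbTE ->; case: ph. Qed.

Section Step.
Variables (t : nat) (Vn : S -> R) (php_in ph : option R) (s : S).
Hypothesis ht : (1 <= t <= H)%N.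
Hypothesis Vn_opt : optimistic t.+1 Vn php_in.
Hypothesis php_in_ge0 : ext_le (Some 0) php_in.
Hypothesis php_in_le : ext_le php_in ph.

Local Notation Q := (Qval H delta n l m Vn ph t s).

Lemma rng_le_bonus_coef (a0 : A) : rng (V t.+1) <= bonus_coef t Vn ph.
Proof.
have Vbnd y : 0 <= V t.+1 y <= (H - t)%:R.
  by have := Vopt_bounds hp hp1 hr a0 H t.+1 y; rewrite subSS.
have rngH := rng_le s Vbnd.
rewrite /bonus_coef; case: ph php_in_le => [x|] //= le_x.
rewrite le_min rngH /=.
case: php_in Vn_opt php_in_ge0 le_x => [x0|] //= opt x0_ge0 x0x.
apply: (rng_le_shift s) => y; have [/andP[V1Vn _] gap] := opt y.
have := gap x0 erefl; have := ler_piMr x0_ge0 (gap_scale_le1 H _ (ltn0Sn t)).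
rewrite V1Vn /=; lra.
Qed.

Lemma Qval_le_horizon b : Q b <= (H.+1 - t)%:R.
Proof.
have maxVn : fmax Vn <= (H - t)%:R.
  by apply: (fmax_le s) => y; have [/andP[_]] := Vn_opt y; rewrite subSS.
have Qb : Q b <= 1 + fmax Vn.
  case: (posnP (n s b)) => [n0|npos]; first by rewrite Qval_unvisited.
  by rewrite Qval_visited //; apply: lerD; rewrite ge_min lexx.
rewrite subSn ?(proj2 (andP ht)) // -natr1; lra.
Qed.

Lemma bellman_le_Qval b : r s b + \sum_s' p s b s' * V t.+1 s' <= Q b.
Proof.
have V1Vn y : V t.+1 y <= Vn y by have [/andP[]] := Vn_opt y.
have pV1 : \sum_s' p s b s' * V t.+1 s' <= fmax Vn.
  by apply: expectation_le => // y; exact: le_trans (V1Vn y) (le_fmax Vn y).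
have /andP[r0 r1] := hr s b.
case: (posnP (n s b)) => [n0|npos]; first by rewrite Qval_unvisited //; apply: lerD.
rewrite Qval_visited //; apply: lerD; rewrite le_min.
  rewrite r1 /=; have := reward_conc _ _ npos; rewrite ler_norml => /andP[dev _]; lra.
rewrite pV1 /=.
have := value_conc _ _ npos _ ht; rewrite ler_norml => /andP[dev _].
have split_dev : \sum_s' (phat s b s' - p s b s') * V t.+1 s' =
    \sum_s' phat s b s' * V t.+1 s' - \sum_s' p s b s' * V t.+1 s'.
  by rewrite -sumrB; apply: eq_bigr => y _; rewrite mulrBl.
have mono : \sum_s' phat s b s' * V t.+1 s' <= \sum_s' phat s b s' * Vn s'.
  by apply: ler_sum => y _; apply: ler_wpM2l (V1Vn y); rewrite divr_ge0.
have bonus : rng (V t.+1) * phi (n s b) <= bonus_coef t Vn ph * phi (n s b).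
  by rewrite ler_wpM2r ?confw_ge0 ?rng_le_bonus_coef.
lra.
Qed.

Lemma Vopt_le_Qval b : (forall b', Q b' <= Q b) -> V t s <= Q b.
Proof.
move=> Qmax; rewrite Vopt_bellman ?(proj2 (andP ht)) //.
by apply: (fmax_le b) => b'; exact: le_trans (bellman_le_Qval b') (Qmax b').
Qed.

Lemma transition_drift b x0 : (0 < n s b)%N -> php_in = Some x0 ->
  \sum_s' phat s b s' * Vn s' - \sum_s' p s b s' * V t.+1 s'
    <= 4 * Num.sqrt #|S|%:R * phi (n s b) * (H - t)%:R + x0 * gap_scale H t.+1.
Proof.
move=> npos e0.
have Vn_bnd y : 0 <= Vn y <= (H - t)%:R.
  have [/andP[V1Vn VnH] _] := Vn_opt y; rewrite -subSS VnH andbT.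
  by apply: le_trans V1Vn; have /andP[] := Vopt_bounds hp hp1 hr b H t.+1 y.
have gap y : Vn y - V t.+1 y <= x0 * gap_scale H t.+1 by have [_ ->] := Vn_opt y.
have -> : \sum_s' phat s b s' * Vn s' - \sum_s' p s b s' * V t.+1 s' =
    \sum_s' (phat s b s' - p s b s') * Vn s' + \sum_s' p s b s' * (Vn s' - V t.+1 s').
  by rewrite -big_split -sumrB; apply: eq_bigr => y _ /=; ring.
apply: lerD; last exact: expectation_le.
apply: le_trans (sum_mul_le_l1 _ _ _ Vn_bnd) _.
by rewrite ler_wpM2r ?ler0n ?l1_conc.
Qed.

Lemma Qval_gap b x0 x : (0 < n s b)%N -> php_in = Some x0 -> ph = Some x ->
  Q b - V t s <=
  Num.max (4 * Num.sqrt #|S|%:R * H%:R ^+ 2 * phi (n s b)) x * gap_scale H t.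
Proof.
move=> npos e0 e; have /andP[t1 tH] := ht.
set q := 4 * Num.sqrt #|S|%:R; set j : R := (H - t)%:R.
set w : R := (H%:R ^+ 2)^-1; set xm := Num.max _ x.
have H0 : H%:R != 0 :> R by rewrite pnatr_eq0 -lt0n; apply: leq_trans tH.
have gap_t1 : gap_scale H t.+1 = j ^+ 2 * w :> R by rewrite /gap_scale subSS.
have gap_t : gap_scale H t = (j + 1) ^+ 2 * w :> R by rewrite /gap_scale subSn // -natr1.
have q4 : 4 <= q.
  rewrite /q -[X in X <= _]mulr1 ler_wpM2l // -{1}sqrtr1 ler_sqrt ?ler0n // ler1n.
  by apply/card_gt0P; exists s.
have qphi : q * phi (n s b) <= xm * w.
  have -> : q * phi (n s b) = q * H%:R ^+ 2 * phi (n s b) * w.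
    by rewrite /w [q * _ * _]mulrAC mulfK // expf_neq0.
  by rewrite ler_wpM2r ?invr_ge0 ?exprn_ge0 ?ler0n // le_max lexx.
have x0xm : x0 <= xm.
  by move: php_in_le; rewrite e0 e /= => x0x; rewrite le_max x0x orbT.
have bellman : r s b + \sum_s' p s b s' * V t.+1 s' <= V t s.
  by rewrite Vopt_bellman //; exact: (le_fmax (fun a => r s a + _)).
have rdev : l s b / (n s b)%:R - r s b <= phi (n s b).
  by have := reward_conc _ _ npos; rewrite ler_norml => /andP[_].
have drift := transition_drift _ _ npos e0.
have Qb : Q b <= (l s b / (n s b)%:R + phi (n s b)) +
                 (\sum_s' phat s b s' * Vn s' + j * phi (n s b)).
  rewrite Qval_visited // e; apply: lerD; first by rewrite ge_min lexx orbT.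
  rewrite ge_min; apply/orP; right; apply: lerD => //.
  by rewrite ler_wpM2r ?confw_ge0 // ge_min lexx.
have j0 : 0 <= j by rewrite ler0n.
have w0 : 0 <= w by rewrite invr_ge0 exprn_ge0.
have := gap_growth (confw_ge0 (n s b)) q4 j0 w0 x0xm qphi.
rewrite gap_t; rewrite -/q -/j gap_t1 in drift; lra.
Qed.

Lemma optimistic_at_update b (Vt : S -> R) :
  (forall b', Q b' <= Q b) -> Vt s = Q b -> optimistic_at t Vt (phiupd H delta n ph s b) s.
Proof.
move=> Qmax Vts; rewrite /optimistic_at Vts.
split; first by rewrite Vopt_le_Qval ?Qval_le_horizon.
move=> x' upd.
have [x e] : exists x, ph = Some x by case: ph upd => [x|] //; exists x.
have [x0 e0] : exists x0, php_in = Some x0.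
  by move: php_in_le; rewrite e; case: php_in => [x0|] //; exists x0.
have npos : (0 < n s b)%N by move: upd; rewrite /phiupd e lt0n; case: eqP.
have upd_eq : phiupd H delta n ph s b =
    Some (Num.max (4 * Num.sqrt #|S|%:R * H%:R ^+ 2 * phi (n s b)) x).
  by rewrite /phiupd e (negbTE (lt0n_neq0 npos)).
move: upd; rewrite upd_eq => -[<-]; exact: Qval_gap e0 e.
Qed.

End Step.

Variables (am : nat -> S -> (A -> R) -> A) (sord : seq S).
Hypothesis ham : forall t s Q b, Q b <= Q (am t s Q).
Hypothesis sord_full : forall s, s \in sord.

Lemma plan_step_optimistic t Vn php_in : (1 <= t <= H)%N ->
  optimistic t.+1 Vn php_in -> ext_le (Some 0) php_in ->
  let res := plan_step H delta am sord n l m t Vn php_in in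
  ext_le php_in res.2 /\ optimistic t res.1.1 res.2.
Proof.
move=> ht Vn_opt php_in_ge0.
pose Inv (D : seq S) (acc : (S -> R) * (S -> A) * option R) :=
  ext_le php_in acc.2 /\ forall s, s \in D -> optimistic_at t acc.1.1 acc.2 s.
suff [le_res opt_res] : Inv sord (plan_step H delta am sord n l m t Vn php_in).
  by split=> // s; apply: opt_res.
apply: foldl_ind => [|D [[V0 P0] ph0] s [le0 opt0]] /=.
  by split=> //; exact: ext_le_refl.
split; first exact: ext_le_trans le0 ext_le_phiupd.
move=> s'; rewrite mem_rcons inE; case: eqP => [-> _|/eqP ne /opt0 opt_s'].
  by apply: optimistic_at_update => //=; rewrite eqxx.
apply: optimistic_at_mono ext_le_phiupd _.
by rewrite /optimistic_at /= (negbTE ne).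
Qed.

Lemma plan_aux_optimistic php0 j : (j <= H)%N -> ext_le (Some 0) php0 ->
  let res := plan_aux H delta am sord n l m php0 j in
  ext_le php0 res.2 /\
  forall tau, (H - j < tau <= H.+1)%N -> optimistic tau (res.1.1 tau) res.2.
Proof.
move=> + php0_ge0; elim: j => [_|j IH jH] /=.
  split=> [|tau]; first exact: ext_le_refl.
  rewrite subn0 => /andP[Htau tauH] s.
  have -> : tau = H.+1 by apply/eqP; rewrite eqn_leq tauH.
  rewrite /optimistic_at /Vopt /gap_scale !subnn /= lexx; split=> // x _.
  by rewrite expr0n /= mul0r mulr0 subrr.
have := IH (ltnW jH); case: (plan_aux _ _ _ _ _ _ _ _ _) => [[V0 P0] ph0] /= [le0 opt0].
set t := (H - j)%N.
have ht : (1 <= t <= H)%N by rewrite subn_gt0 jH leq_subr.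
have opt_next : optimistic t.+1 (V0 t.+1) ph0.
  by apply: opt0; rewrite /t ltnS leqnn /= ltnS leq_subr.
have := plan_step_optimistic _ _ _ ht opt_next (ext_le_trans php0_ge0 le0).
case: (plan_step _ _ _ _ _ _ _ _ _ _) => [[Vt Pt] ph1] /= [le1 opt1].
split=> [|tau tau_range]; first exact: ext_le_trans le0 le1.
case: eqP => [-> //|ne] s; apply: optimistic_at_mono le1 _; apply: opt0.
by move: tau_range ne; rewrite /t; lia.
Qed.

Lemma plan_optimistic php0 : ext_le (Some 0) php0 ->
  let res := plan H delta am sord n l m php0 in
  ext_le php0 res.2 /\ forall t s, (1 <= t <= H)%N -> V t s <= res.1.1 t s.
Proof.
move=> php0_ge0; have [le_res opt_res] := plan_aux_optimistic _ _ (leqnn H) php0_ge0.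
split=> // t s /andP[t1 tH].
have t_range : (H - H < t <= H.+1)%N by rewrite subnn t1 leqW.
by have [/andP[]] := opt_res t t_range s.
Qed.

End Planning.

Theorem lemma6 (R : realType) (S A : finType) (H : nat) (delta : R)
    (p0 : S -> R) (p : S -> A -> S -> R) (r : S -> A -> R)
    (hp0 : forall s, 0 <= p0 s) (hp01 : \sum_(s : S) p0 s = 1)
    (hp : forall s a s', 0 <= p s a s') (hp1 : forall s a, \sum_(s' : S) p s a s' = 1)
    (hr : forall s a, 0 <= r s a <= 1)
    (hdelta : 0 < delta <= 1)
    (amax : nat -> nat -> S -> (A -> R) -> A)
    (hamax : forall k t s (Q : A -> R) (a : A), Q a <= Q (amax k t s Q))
    (sord : seq S) (hsord : perm_eq sord (enum S))
    (x : nat -> nat -> S) (rw : nat -> nat -> R)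
    (hrw : forall i t, 0 <= rw i t <= 1)
    (pol : nat -> S -> nat -> A) (php : nat -> option R)
    (hrun : ubevs_run H delta amax sord x rw pol php)
    (hgood : no_failure H delta p0 p r x rw pol) :
  forall (k t : nat) (s : S), (1 <= t <= H)%N ->
    Vopt p r H t s <= Vtil H delta amax sord x rw pol php k t s.
Proof.
move=> k t s ht.
have sord_full s' : s' \in sord by rewrite (perm_mem hsord) mem_enum.
have [php_init run] := hrun.
have plan_ok i : ext_le (Some 0) (php i) -> ext_le (php i) (php i.+1) /\
    forall t s, (1 <= t <= H)%N -> Vopt p r H t s <= Vtil H delta amax sord x rw pol php i t s.
  move=> php_ge0; rewrite (run i).2.
  apply: plan_optimistic => // s' a' npos; have [_ conc_r conc_v conc_l] := hgood i s' a';
  by [exact: conc_r npos | exact: conc_v npos | exact: conc_l npos].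
have php_ge0 i : ext_le (Some 0) (php i).
  elim: i => [|j IH]; first by rewrite php_init; exact: ext_le_refl.
  exact: ext_le_trans IH (plan_ok j IH).1.
exact: (plan_ok k (php_ge0 k)).2.
Qed.
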